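(* Let $\sigma\in\mathrm{Av}_n(312)$ and let $i$ be a descent of $\sigma$ (i.e. $\sigma(i)>\sigma(i+1)$). Let $j\in[n]$ be the minimal index such that $\sigma(k)\ge\sigma(i)$ for all $k\in[j,i]$, and let $\tau=\sigma\circ(i\ \ i{+}1)$ be obtained from $\sigma$ by swapping the entries in positions $i$ and $i+1$. Then \[ \pi_\downarrow(\tau)=\sigma\circ\begin{pmatrix} i{+}1 & i & \cdots & j{+}1 & j\end{pmatrix}, \] i.e. $\pi_\downarrow(\tau)$ is obtained from $\sigma$ by moving the entry $\sigma(i+1)$ to position $j$ and shifting the entries in positions $j,\dots,i$ one place to the right.
   Context: $\mathrm{Av}_n(312)$ is the set of permutations $\sigma\in S_n$ with no indices $i_1<i_2<i_3$ such that $\sigma(i_1)>\sigma(i_3)>\sigma(i_2)$. Permutations are written in one-line notation and composed as functions; the cycle $(i{+}1\ i\ \cdots\ j)$ maps $i+1\mapsto i\mapsto\cdots\mapsto j\mapsto i+1$. For $\sigma\in S_n$, an allowable swap is available if there are indices $a,b$ with $a+1<b$ and $\sigma(a+1)<\sigma(b)<\sigma(a)$; it exchanges the entries in positions $a$ and $a+1$. The projection $\pi_\downarrow:S_n\to\mathrm{Av}_n(312)$ sends $\sigma$ to the permutation obtained by repeatedly applying allowable swaps until none is available; this result is known to be independent of the order of swaps. *)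

(* Permutations of [n] in one-line notation as seq nat,
   positions and values are 1-based: sigma(k) = nth 0 s (k-1). *)
From Stdlib Require Import Relations.
From mathcomp Require Import all_boot.
Set Implicit Arguments. Unset Strict Implicit. Unset Printing Implicit Defensive.

Definition sg (s : seq nat) (k : nat) : nat := nth 0 s k.-1.

Definition is_perm (n : nat) (s : seq nat) : Prop := perm_eq s (iota 1 n).

Definition avoids312 (n : nat) (s : seq nat) : Prop :=
  forall i1 i2 i3, 1 <= i1 -> i1 < i2 -> i2 < i3 -> i3 <= n ->
    ~ (sg s i3 < sg s i1 /\ sg s i2 < sg s i3).

Definition compose_pos (s : seq nat) (f : nat -> nat) : seq nat :=
  mkseq (fun k => sg s (f k.+1)) (size s).

Definition transp (a b : nat) (k : nat) : nat :=
  if k == a then b else if k == b then a else k.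

(* the cycle (i+1 i ... j+1 j): i+1 |-> i |-> ... |-> j |-> i+1 *)
Definition cyc (j i : nat) (k : nat) : nat :=
  if k == j then i.+1 else if (j < k) && (k <= i.+1) then k.-1 else k.

Definition allowable_swap (s t : seq nat) : Prop :=
  exists a b, 1 <= a /\ a.+1 < b /\ b <= size s /\
                 sg s a.+1 < sg s b /\ sg s b < sg s a /\
                 t = compose_pos s (transp a a.+1).

Definition no_allowable_swap (s : seq nat) : Prop :=
  forall t, ~ allowable_swap s t.

(* rho is the result of repeatedly applying allowable swaps to tau until
   none is available; by the (cited) order-independence this is pi_down(tau). *)
Definition is_pi_down (tau rho : seq nat) : Prop :=
  clos_refl_trans (seq nat) allowable_swap tau rho /\ no_allowable_swap rho.

From mathcomp Require Import all_boot zify.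

(* Moving sigma(i+1) leftwards past each entry sigma(k), j <= k < i, is an
   allowable swap, witnessed by sigma(i) sitting at position i+1, because
   sigma(i+1) < sigma(i) < sigma(k); these swaps carry
   tau = sigma o (i i+1) to rho = sigma o (i+1 i ... j).  No swap is available
   in rho: one at positions (j-1, j) with witness b <= i+1 would need
   sigma(j-1) > sigma(b-1) >= sigma(i), against the minimality of j; one at
   (j, j+1) would need sigma(j) < sigma(i+1) < sigma(i); and every other swap
   pulls back along the cycle to an occurrence of 312 in sigma. *)

Lemma size_compose_pos s f : size (compose_pos s f) = size s.
Proof. exact: size_mkseq. Qed.

Lemma sg_compose_pos s f k :
  0 < k <= size s -> sg (compose_pos s f) k = sg s (f k).
Proof. by move=> k_range; rewrite /sg nth_mkseq ?prednK //; lia. Qed.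

Lemma compose_posA s f g :
  (forall k, 0 < k <= size s -> 0 < g k <= size s) ->
  compose_pos (compose_pos s f) g = compose_pos s (f \o g).
Proof.
move=> g_range; apply: (@eq_from_nth _ 0) => [|k]; rewrite !size_compose_pos //.
move=> k_lt; rewrite !nth_mkseq ?size_compose_pos //.
by rewrite sg_compose_pos //; apply: g_range; lia.
Qed.

Lemma sg_inj (s : seq nat) :
  uniq s -> {in [pred k | 0 < k <= size s] &, injective (sg s)}.
Proof.
(* [nth_uniq] measures [size s] over the eqType carrier of nat; [set] merges
   both copies so that lia sees a single atom. *)
move=> s_uniq x y /[!inE] x_range y_range /eqP; rewrite nth_uniq //; [move/eqP|..];
  by move: x_range y_range; set m := size _; lia.
Qed.

Lemma cyc_diag i : cyc i i =1 transp i i.+1.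
Proof. by move=> x; rewrite /cyc /transp; do ![case: ifP] => *; lia. Qed.

Lemma cyc_transp k i : k <= i -> cyc k.+1 i \o transp k k.+1 =1 cyc k i.
Proof. by move=> k_le x; rewrite /cyc /transp /=; do ![case: ifP] => *; lia. Qed.

Lemma cyc_cases j i k :
  [/\ k = j & cyc j i k = i.+1] \/
  [/\ j < k <= i.+1 & cyc j i k = k.-1] \/
  [/\ k < j \/ i.+1 < k & cyc j i k = k].
Proof. by rewrite /cyc; do ![case: ifP] => *; lia. Qed.

Section SwapChain.

Variables (s : seq nat) (i : nat).
Hypotheses (i_lt : i < size s) (i_descent : sg s i.+1 < sg s i).

Lemma allowable_swap_cyc k :
  0 < k < i -> sg s i < sg s k ->
  allowable_swap (compose_pos s (cyc k.+1 i)) (compose_pos s (cyc k i)).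
Proof.
move=> k_range above_k; exists k, i.+1.
rewrite size_compose_pos !sg_compose_pos; try lia.
have -> : cyc k.+1 i k.+1 = i.+1 by rewrite /cyc eqxx.
have -> : cyc k.+1 i k = k by rewrite /cyc; do ![case: ifP] => *; lia.
have -> : cyc k.+1 i i.+1 = i by rewrite /cyc; do ![case: ifP] => *; lia.
do 5 (split; first lia).
rewrite compose_posA; last by move=> x x_range; rewrite /transp; do ![case: ifP] => *; lia.
by apply: eq_mkseq => x; rewrite cyc_transp //; lia.
Qed.

Lemma swaps_to_cyc j :
  0 < j <= i -> (forall k, j <= k < i -> sg s i < sg s k) ->
  Relation_Operators.clos_refl_trans _ allowable_swap
    (compose_pos s (transp i i.+1)) (compose_pos s (cyc j i)).
Proof.
move=> j_range above_block.
have -> : compose_pos s (transp i i.+1) = compose_pos s (cyc i i).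
  by apply: eq_mkseq => x; rewrite cyc_diag.
suff chain m : j <= m <= i ->
    Relation_Operators.clos_refl_trans _ allowable_swap
      (compose_pos s (cyc m i)) (compose_pos s (cyc j i)).
  by apply: chain; lia.
elim: m => [|m IH] m_range; first lia.
have [->|j_le_m] := eqVneq j m.+1; first exact: Relation_Operators.rt_refl.
apply: Relation_Operators.rt_trans (IH _); last lia.
apply: Relation_Operators.rt_step; apply: allowable_swap_cyc; try lia.
by apply: above_block; lia.
Qed.

End SwapChain.

Lemma no_allowable_swap_cyc s i j :
  avoids312 (size s) s -> 0 < j <= i -> i < size s -> sg s i.+1 < sg s i ->
  (forall k, j <= k <= i -> sg s i <= sg s k) ->
  (1 < j -> sg s j.-1 < sg s i) ->
  no_allowable_swap (compose_pos s (cyc j i)).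
Proof.
move=> s312 j_range i_lt descent above_block below_block t.
case=> a [b [a_gt0 [ab [b_le [lo [hi _]]]]]].
rewrite size_compose_pos in b_le; rewrite !sg_compose_pos in lo hi; try lia.
have ca := cyc_cases j i a; have ca1 := cyc_cases j i a.+1; have cb := cyc_cases j i b.
have [a1_j|a1_nj] := eqVneq a.+1 j.
  have [b_le_i1|b_gt_i1] := leqP b i.+1.
    have [ea eb] : cyc j i a = a /\ cyc j i b = b.-1 by lia.
    rewrite ea eb in hi.
    have := above_block b.-1; move: below_block; rewrite -a1_j /=; lia.
  by apply: (s312 (cyc j i a) (cyc j i a.+1) (cyc j i b)); lia.
have [a_j|a_nj] := eqVneq a j.
  have [ea ea1] : cyc j i a = i.+1 /\ cyc j i a.+1 = j by lia.
  rewrite ea in hi; rewrite ea1 in lo.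
  have := above_block j; lia.
by apply: (s312 (cyc j i a) (cyc j i a.+1) (cyc j i b)); lia.
Qed.

Theorem proposition4p2 (n : nat) (s : seq nat) (i j : nat) :
  is_perm n s -> avoids312 n s ->
  1 <= i -> i < n -> sg s i.+1 < sg s i ->
  1 <= j -> j <= i ->
  (forall k, j <= k -> k <= i -> sg s i <= sg s k) ->
  (forall j', 1 <= j' -> (forall k, j' <= k -> k <= i -> sg s i <= sg s k) ->
     j <= j') ->
  is_pi_down (compose_pos s (transp i i.+1)) (compose_pos s (cyc j i)).
Proof.
move=> s_perm s312 i_gt0 i_lt descent j_gt0 j_le above_block j_min.
have size_s : size s = n by rewrite (perm_size s_perm) size_iota.
have s_uniq : uniq s by rewrite (perm_uniq s_perm) iota_uniq.
rewrite -size_s in i_lt s312.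
have above_strict k : j <= k < i -> sg s i < sg s k.
  move=> k_range; have sg_ne : sg s i <> sg s k.
    by move/(sg_inj s s_uniq); rewrite !inE; lia.
  by have := above_block k; lia.
have below_block : 1 < j -> sg s j.-1 < sg s i.
  move=> j_gt1; rewrite ltnNge; apply/negP => below_ge.
  suff : j <= j.-1 by lia.
  apply: j_min => [|k k_ge k_le]; first lia.
  have [->|k_ne] := eqVneq k j.-1; first exact: below_ge.
  by apply: above_block; lia.
split; first by apply: swaps_to_cyc => //; lia.
apply: no_allowable_swap_cyc => //; first lia.
by move=> k /andP[]; apply: above_block.
Qed.
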